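(* Let $(G,\lambda)$ be a matching problem, $G=(V,E)$ a finite simple graph and $\lambda\in\mathbb{R}_{>0}^n$, and consider the condition (C): $\sum_{i\in V(\mathcal{I})}\lambda_i>\frac12\sum_{i\in V}\lambda_i$ for every independent set $\mathcal{I}$ of $G$, where $V(\mathcal{I})=\bigcup_{i\in\mathcal{I}}V_i$. If either (i) $G$ is a complete graph with $n\ge3$ nodes, or (ii) $G$ is the diamond graph ($V=\{1,2,3,4\}$, $E=\{\{1,2\},\{1,3\},\{2,3\},\{2,4\},\{3,4\}\}$), then stabilizability of $(G,\lambda)$ implies (C), and therefore $(G,\lambda,\Phi)$ is stable for every greedy policy $\Phi$ adapted to $G$. If either (iii) $G$ has diameter at least $3$, or (iv) $G$ contains a node of degree $1$, then (C) is never satisfied.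
   Context: $V_i$ is the set of neighbours of $i$; an independent set is a non-empty set of pairwise non-adjacent nodes. Matching model: classes arrive as independent Poisson processes of rates $\lambda_i$; classes $i,j$ matchable iff $\{i,j\}\in E$; unmatched items wait. A policy adapted to $G$: countable state space with queue-size map $|\cdot|$ and unique empty state, probabilities $\Phi(s,i,j,s')$ of matching an arriving class-$i$ item with a waiting neighbour class $j$ or leaving it unmatched ($j=\bot$), new state consistent with queue sizes, irreducible state chain from the empty state. Greedy: no arriving item is left unmatched while a compatible item is waiting. Stable: the state chain is positive recurrent; $(G,\lambda)$ is stabilizable if some policy makes it stable. *)

From HB Require Import structures.
From mathcomp Require Import all_boot all_order all_algebra.
From mathcomp Require Import all_classical all_reals all_analysis.
From Stdlib Require Import Relation_Operators.

Set Implicit Arguments.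
Unset Strict Implicit.
Unset Printing Implicit Defensive.

Import Order.TTheory GRing.Theory Num.Theory.
Local Open Scope ring_scope.

Definition simple_graph (n : nat) (e : rel 'I_n) : Prop :=
  symmetric e /\ irreflexive e.

Definition nbhd (n : nat) (e : rel 'I_n) (i : 'I_n) : {set 'I_n} :=
  [set j | e i j].

Definition independent (n : nat) (e : rel 'I_n) (I : {set 'I_n}) : bool :=
  (0 < #|I|)%N && [forall i in I, forall j in I, ~~ e i j].

Definition nbhd_set (n : nat) (e : rel 'I_n) (I : {set 'I_n}) : {set 'I_n} :=
  \bigcup_(i in I) nbhd e i.

Definition condC (R : realType) (n : nat) (e : rel 'I_n) (lam : 'I_n -> R)
  : Prop :=
  forall I : {set 'I_n}, independent e I ->
    \sum_(i in nbhd_set e I) lam i > 2^-1 * \sum_(i : 'I_n) lam i.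

Definition complete_graph (n : nat) (e : rel 'I_n) : Prop :=
  forall x y, e x y = (x != y).

(* The diamond graph on {1,2,3,4}, encoded on 'I_4 = {0,1,2,3} via
   node k |-> k-1: edges {1,2},{1,3},{2,3},{2,4},{3,4}. *)
Definition diamond_edge (x y : nat) : bool :=
  [|| (x == 0) && (y == 1), (x == 0) && (y == 2), (x == 1) && (y == 2),
      (x == 1) && (y == 3) | (x == 2) && (y == 3)]%N.

Definition diamond_rel : rel 'I_4 :=
  fun x y => diamond_edge x y || diamond_edge y x.

Fixpoint within (n : nat) (e : rel 'I_n) (k : nat) (x y : 'I_n) : bool :=
  match k with
  | 0 => x == y
  | k'.+1 => within e k' x y || [exists z, e x z && within e k' z y]
  end.

(* diameter >= 3 : some pair of nodes is at distance >= 3 (distance is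
   +infinity between different connected components) *)
Definition diameter_ge3 (n : nat) (e : rel 'I_n) : Prop :=
  exists x y : 'I_n, ~~ within e 2 x y.

Definition degree (n : nat) (e : rel 'I_n) (x : 'I_n) : nat := #|nbhd e x|.

(* A policy: a countable state space, a queue-size map, a distinguished
   empty state and the matching probabilities
   Phi s i j s' (j = None stands for "left unmatched", i.e. j = bottom). *)
Record policy (R : realType) (n : nat) := Policy {
  pstate : countType;
  qsize : pstate -> 'I_n -> nat;
  pempty : pstate;
  Phi : pstate -> 'I_n -> option 'I_n -> pstate -> R
}.
Arguments pstate {R n} p.
Arguments qsize {R n} p _ _.
Arguments pempty {R n} p.
Arguments Phi {R n} p _ _ _ _.

(* Transition kernel of the state chain observed at arrival epochs:
   the arriving item is of class i with probability lam_i / sum lam. *)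
Definition trans (R : realType) (n : nat) (lam : 'I_n -> R) (p : policy R n)
  (s s' : pstate p) : R :=
  \sum_(i : 'I_n) (lam i / \sum_(k : 'I_n) lam k) *
     \sum_(j : option 'I_n) Phi p s i j s'.
Arguments trans {R n} lam p s s'.

Definition adapted (R : realType) (n : nat) (e : rel 'I_n) (lam : 'I_n -> R)
  (p : policy R n) : Prop :=
  (forall s, (forall x, qsize p s x = 0%N) <-> s = pempty p) /\
  (forall s i j s', 0 <= Phi p s i j s') /\
  (forall s i,
     \sum_(j : option 'I_n) (\esum_(s' in @setT (pstate p)) (Phi p s i j s')%:E)
       = 1%E) /\
  (forall s i s', Phi p s i None s' <> 0 ->
     forall x, qsize p s' x = (qsize p s x + (x == i))%N) /\
  (forall s i j s', Phi p s i (Some j) s' <> 0 ->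
     [/\ e i j, (0 < qsize p s j)%N &
         forall x, qsize p s' x = (qsize p s x - (x == j))%N]) /\
  (forall s s' : pstate p,
     clos_refl_trans (pstate p) (fun a b => 0 < trans lam p a b) s s').

Definition greedy (R : realType) (n : nat) (e : rel 'I_n) (p : policy R n)
  : Prop :=
  forall s i j s', e i j -> (0 < qsize p s j)%N -> Phi p s i None s' = 0.

(* first_return lam p k s : probability, starting from s, that the chain
   hits the empty state for the first time at step k+1 *)
Fixpoint first_return (R : realType) (n : nat) (lam : 'I_n -> R)
  (p : policy R n) (k : nat) (s : pstate p) : \bar R :=
  match k with
  | 0 => (trans lam p s (pempty p))%:E
  | k'.+1 => \esum_(s' in [set x | x <> pempty p]%classic)
               ((trans lam p s s')%:E * @first_return R n lam p k' s')%E
  end.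
Arguments first_return {R n} lam p k s.

(* stable: the (irreducible) state chain is positive recurrent, i.e. the
   empty state is recurrent with finite expected return time *)
Definition stable (R : realType) (n : nat) (lam : 'I_n -> R) (p : policy R n)
  : Prop :=
  (\sum_(k <oo) first_return lam p k (pempty p) = 1)%E /\
  (\sum_(k <oo) ((k.+1)%:R%:E * first_return lam p k (pempty p)) < +oo)%E.

Definition stabilizable (R : realType) (n : nat) (e : rel 'I_n)
  (lam : 'I_n -> R) : Prop :=
  exists p : policy R n, adapted e lam p /\ stable lam p.

From HB Require Import structures.
From mathcomp Require Import all_boot all_order all_algebra.
From mathcomp Require Import all_classical all_reals all_analysis.
From mathcomp Require Import ring lra.

Set Implicit Arguments.
Unset Strict Implicit.
Unset Printing Implicit Defensive.

Import Order.TTheory GRing.Theory Num.Theory.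
Local Open Scope ring_scope.

(* Fix a node [w] whose non-neighbours are pairwise non-adjacent, and let
   [D] count the waiting items outside the neighbourhood [V_w] minus those in it.
   Each arrival moves [D] by one, and an arrival outside [V_w] increases it, since
   it can only be matched with an item in [V_w].  So if the classes outside [V_w]
   carry at least half of the arrival rate, [max D 0] is a submartingale with
   bounded increments and the mean return time to the empty state is infinite.
   In the complete and the diamond graphs every node qualifies, so stabilizability
   gives [lam(V_w) > 1/2 sum lam] for all [w], whence (C).  Conversely, under that
   condition a greedy policy matches every arrival adjacent to a waiting class [w],
   so the total queue length has negative drift and Foster's criterion applies.
   Finally, (C) applied to two singletons with disjoint neighbourhoods (two nodes at
   distance at least 3, or a leaf and its neighbour) exceeds the total rate. *)

Lemma esumZl (R : realType) (T : choiceType) (A : set T) (a : T -> \bar R) (c : R) :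
  (0 <= c)%R -> (forall x, 0 <= a x)%E ->
  (\esum_(x in A) (c%:E * a x) = c%:E * \esum_(x in A) a x)%E.
Proof.
move=> c0 a0; rewrite /esum -ereal_supZl //; last first.
  by apply/set0P; exists 0%E; exists set0; [exact: fsets_set0|rewrite fsbig_set0].
rewrite image_comp; congr ereal_sup; apply: eq_imagel => X _ /=.
by rewrite ge0_mule_fsumr.
Qed.

Lemma ler_sum_subset (R : numDomainType) (I : finType) (A B : {pred I}) (F : I -> R) :
  (forall i, 0 <= F i) -> {subset A <= B} -> \sum_(i in A) F i <= \sum_(i in B) F i.
Proof.
move=> F_ge0 AB; rewrite [X in _ <= X](bigID [in A]) /=.
have -> : \sum_(i in B | i \in A) F i = \sum_(i in A) F i.
  by apply: eq_bigl => i; apply/andb_idl => /AB.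
by rewrite lerDl sumr_ge0.
Qed.

Section ReturnTimes.
Local Open Scope ereal_scope.
Variables (R : realType) (S : choiceType) (P : S -> S -> R) (o : S).
Hypothesis P_ge0 : forall s s', (0 <= P s s')%R.
Hypothesis P_sum1 : forall s, \esum_(s' in setT) (P s s')%:E = 1.

Definition kernel (g : S -> \bar R) s := \esum_(s' in setT) ((P s s')%:E * g s').

(* one step of the chain, killed when it enters [o] *)
Definition taboo (g : S -> \bar R) s :=
  \esum_(s' in [set x | x <> o]) ((P s s')%:E * g s').

Fixpoint taboo_iter N (g : S -> \bar R) s :=
  if N is N'.+1 then taboo (taboo_iter N' g) s else g s.

Fixpoint first_passage k s :=
  if k is k'.+1 then taboo (first_passage k') s else (P s o)%:E.

Definition positive_recurrent :=
  \sum_(k <oo) first_passage k o = 1 /\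
  \sum_(k <oo) (k.+1%:R%:E * first_passage k o) < +oo.

Let PE_ge0 s s' : 0 <= (P s s')%:E. Proof. by rewrite lee_fin. Qed.

Lemma taboo_ge0 g s : (forall x, 0 <= g x) -> 0 <= taboo g s.
Proof. by move=> g0; apply: esum_ge0 => x _; exact: mule_ge0. Qed.

Lemma kernel_split g s : (forall x, 0 <= g x) ->
  kernel g s = (P s o)%:E * g o + taboo g s.
Proof.
move=> g0; rewrite /kernel (esumID [set o]) => [|x _]; last exact: mule_ge0.
by rewrite !setTI esum_set1 //; exact: mule_ge0.
Qed.

Lemma taboo_le_kernel g s : (forall x, 0 <= g x) -> taboo g s <= kernel g s.
Proof. by move=> g0; rewrite kernel_split // leeDr // mule_ge0. Qed.

Lemma tabooD f g s : (forall x, 0 <= f x) -> (forall x, 0 <= g x) ->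
  taboo (fun x => f x + g x) s = taboo f s + taboo g s.
Proof.
move=> f0 g0; rewrite /taboo -esumD => [|x _|x _]; [|exact: mule_ge0..].
by apply: eq_esum => x _; rewrite ge0_muleDr.
Qed.

Lemma tabooZ (c : R) f s : (0 <= c)%R -> (forall x, 0 <= f x) ->
  taboo (fun x => c%:E * f x) s = c%:E * taboo f s.
Proof.
move=> c0 f0; rewrite /taboo -esumZl // => [|x]; last exact: mule_ge0.
by apply: eq_esum => x _; rewrite muleCA.
Qed.

Lemma taboo_sum N (f : nat -> S -> \bar R) s : (forall k x, 0 <= f k x) ->
  taboo (fun x => \sum_(k < N) f k x) s = \sum_(k < N) taboo (f k) s.
Proof.
move=> f0; rewrite /taboo -esum_sum => [|x k _ _]; last exact: mule_ge0.
by apply: eq_esum => x _; rewrite ge0_sume_distrr.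
Qed.

Lemma le_taboo f g s : (forall x, 0 <= f x) ->
  (forall x, x <> o -> P s x != 0%R -> f x <= g x) -> taboo f s <= taboo g s.
Proof.
move=> f0 fg; apply: le_esum => x xo.
have [->|Psx] := eqVneq (P s x) 0%R; first by rewrite !mul0e.
by apply: lee_wpmul2l => //; exact: fg.
Qed.

Lemma eq_taboo f g s : (forall x, x <> o -> f x = g x) -> taboo f s = taboo g s.
Proof. by move=> fg; apply: eq_esum => x xo; rewrite fg. Qed.

Lemma taboo1 s : (P s o)%:E + taboo (fun=> 1) s = 1.
Proof.
rewrite -[(P s o)%:E]mule1 -(@kernel_split (fun=> 1)) // -[RHS](P_sum1 s).
by apply: eq_esum => x _; rewrite mule1.
Qed.

Lemma taboo1_le s : taboo (fun=> 1) s <= 1.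
Proof. by rewrite -[X in _ <= X](taboo1 s) leeDr. Qed.

Lemma first_passage_ge0 k s : 0 <= first_passage k s.
Proof. by elim: k s => [|k IHk] s //=; exact: taboo_ge0. Qed.

Definition return_within N s := \sum_(k < N) first_passage k s.

(* the probability of avoiding [o] during the first [N] steps *)
Definition avoid N := taboo_iter N (fun=> 1).

Definition return_moment N s := \sum_(k < N) (k.+1%:R%:E * first_passage k s).

(* the mean of the return time to [o] truncated at [N.+1] *)
Definition truncated_mean N s := return_moment N s + N.+1%:R%:E * avoid N s.

Lemma avoidS N s : avoid N.+1 s = taboo (avoid N) s.
Proof. by []. Qed.

Lemma return_within_partial N s :
  \sum_(0 <= k < N) first_passage k s = return_within N s.
Proof. by rewrite big_mkord. Qed.

Lemma return_moment_partial N s :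
  \sum_(0 <= k < N) (k.+1%:R%:E * first_passage k s) = return_moment N s.
Proof. by rewrite big_mkord. Qed.

Lemma return_within_ge0 N s : 0 <= return_within N s.
Proof. by apply: sume_ge0 => k _; exact: first_passage_ge0. Qed.

Lemma taboo_iter_ge0 N g s : (forall x, 0 <= g x) -> 0 <= taboo_iter N g s.
Proof. by move=> g0; elim: N s => [|N IHN] s //=; exact: taboo_ge0. Qed.

Lemma avoid_ge0 N s : 0 <= avoid N s.
Proof. exact: taboo_iter_ge0. Qed.

Lemma return_moment_ge0 N s : 0 <= return_moment N s.
Proof. by apply: sume_ge0 => k _; apply: mule_ge0 => //; exact: first_passage_ge0. Qed.

Lemma truncated_mean_ge0 N s : 0 <= truncated_mean N s.
Proof. by rewrite adde_ge0 ?return_moment_ge0 ?mule_ge0 ?avoid_ge0. Qed.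

Lemma return_withinS N s :
  return_within N.+1 s = (P s o)%:E + taboo (return_within N) s.
Proof.
rewrite /return_within big_ord_recl taboo_sum //.
by move=> k x; exact: first_passage_ge0.
Qed.

Lemma return_within_avoid N s : return_within N s + avoid N s = 1.
Proof.
elim: N s => [|N IHN] s; first by rewrite /return_within big_ord0 add0e.
rewrite return_withinS -addeA -(tabooD s (return_within_ge0 N) (avoid_ge0 N)).
by rewrite (@eq_taboo _ (fun=> 1)) ?taboo1 // => x _; rewrite IHN.
Qed.

Lemma return_within_le1 N s : return_within N s <= 1.
Proof. by rewrite -(return_within_avoid N s) leeDl // avoid_ge0. Qed.

Lemma avoid_fin N s : avoid N s \is a fin_num.
Proof.
rewrite ge0_fin_numE ?avoid_ge0 // (le_lt_trans _ (ltry 1%R)) //.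
by rewrite -(return_within_avoid N s) leeDr // return_within_ge0.
Qed.

Lemma return_momentS N s : return_moment N.+1 s =
  (P s o)%:E + taboo (fun x => return_moment N x + return_within N x) s.
Proof.
rewrite /return_moment big_ord_recl /= mul1e; congr (_ + _).
have F0 k x : 0 <= first_passage k x := first_passage_ge0 k x.
transitivity (\sum_(k < N) taboo (fun x => k.+2%:R%:E * first_passage k x) s).
  by apply: eq_bigr => k _; rewrite tabooZ.
rewrite -(@taboo_sum N (fun k x => k.+2%:R%:E * first_passage k x)) => [|k x];
  last exact: mule_ge0.
apply: eq_taboo => x _; rewrite /return_within -big_split /=.
by apply: eq_bigr => k _; rewrite -[in LHS]addn1 natrD EFinD ge0_muleDl ?mul1e.
Qed.

Lemma truncated_meanS N s :
  truncated_mean N.+1 s = 1 + taboo (truncated_mean N) s.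
Proof.
have avoid0 x : 0 <= N.+2%:R%:E * avoid N x by rewrite mule_ge0 ?avoid_ge0.
have RW0 x : 0 <= return_moment N x + return_within N x.
  by rewrite adde_ge0 ?return_moment_ge0 ?return_within_ge0.
rewrite [truncated_mean N.+1 s]/truncated_mean return_momentS avoidS.
rewrite -(tabooZ s (ler0n _ N.+2) (avoid_ge0 N)).
rewrite -addeA -(tabooD s RW0 avoid0).
rewrite (@eq_taboo _ (fun x => truncated_mean N x + 1)) => [|x _]; last first.
  rewrite /truncated_mean -(return_within_avoid N x) -[N.+2]addn1 natrD EFinD.
  by rewrite ge0_muleDl ?avoid_ge0 // mul1e addeACA.
rewrite (tabooD s (truncated_mean_ge0 N) (fun=> lee01)).
by rewrite [_ + taboo _ s]addeC addeA taboo1.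
Qed.

Lemma first_passage_series_eq1 s (C : R) :
  (forall N, N.+1%:R%:E * avoid N s <= C%:E) ->
  \sum_(k <oo) first_passage k s = 1.
Proof.
move=> avoidC; apply/eqP; rewrite eq_le; apply/andP; split.
  apply: lime_le; first by apply: is_cvg_nneseries => k _ _; exact: first_passage_ge0.
  by near=> N; rewrite return_within_partial return_within_le1.
apply/lee_addgt0Pr => eps eps_gt0.
pose N := Num.truncn (C / eps).
rewrite -(return_within_avoid N s); apply: leeD.
  rewrite -return_within_partial.
  by apply: nneseries_lim_ge => k _ _; exact: first_passage_ge0.
have avoidE := fineK (avoid_fin N s).
have := avoidC N; rewrite -avoidE -EFinM lee_fin => hN.
have CN : (C < N.+1%:R * eps)%R by rewrite -ltr_pdivrMr //; exact: truncnS_gt.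
rewrite -avoidE lee_fin -(ler_pM2l (ltr0Sn _ N)).
by apply: le_trans hN _; exact: ltW.
Unshelve. all: by end_near.
Qed.

Section Foster.
Variables (V : S -> R) (c : R).
Hypothesis V_ge0 : forall s, (0 <= V s)%R.
Hypothesis V_drift :
  forall s, s <> o -> kernel (fun x => (V x)%:E) s + 1 <= (V s)%:E.
Hypothesis V_o : kernel (fun x => (V x)%:E) o <= c%:E.

Let VE_ge0 x : 0 <= (V x)%:E. Proof. by rewrite lee_fin. Qed.

Lemma taboo_V1_le s : taboo (fun x => (V x + 1)%R%:E) s <= kernel (fun x => (V x)%:E) s + 1.
Proof.
under eq_taboo => x _ do rewrite EFinD.
by rewrite tabooD // leeD ?taboo_le_kernel ?taboo1_le.
Qed.

Lemma truncated_mean_le N s : s <> o -> truncated_mean N s <= (V s + 1)%:E.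
Proof.
elim: N s => [|N IHN] s so.
  by rewrite /truncated_mean /return_moment big_ord0 add0e mul1e lee_fin lerDr.
rewrite truncated_meanS EFinD addeC leeD // (le_trans _ (V_drift so)) //.
apply: le_trans (taboo_V1_le s); apply: le_taboo => [x|x xo _].
  exact: truncated_mean_ge0.
exact: IHN.
Qed.

Lemma truncated_mean_o N : truncated_mean N o <= (c + 2)%:E.
Proof.
have c_ge0 : (0 <= c)%R.
  by rewrite -lee_fin (le_trans _ V_o) // esum_ge0 // => x _; exact: mule_ge0.
case: N => [|N].
  by rewrite /truncated_mean /return_moment big_ord0 add0e mul1e lee_fin; lra.
rewrite truncated_meanS.
apply: (@le_trans _ _ (1 + (kernel (fun x => (V x)%:E) o + 1))).
  rewrite leeD2l // (le_trans _ (taboo_V1_le o)) //.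
  by apply: le_taboo => [x|x xo _]; [exact: truncated_mean_ge0|exact: truncated_mean_le].
have -> : (c + 2 = 1 + (c + 1))%R by ring.
by rewrite !EFinD leeD2l // leeD2r.
Qed.

Theorem foster_positive_recurrent : positive_recurrent.
Proof.
split.
  apply: (first_passage_series_eq1 (C := c + 2)) => N.
  by apply: le_trans (truncated_mean_o N); rewrite leeDr // return_moment_ge0.
apply: (@le_lt_trans _ _ (c + 2)%:E); last exact: ltry.
apply: lime_le.
  by apply: is_cvg_nneseries => k _ _; apply: mule_ge0 => //; exact: first_passage_ge0.
near=> N; rewrite return_moment_partial; apply: le_trans (truncated_mean_o N).
by rewrite leeDl // mule_ge0 // avoid_ge0.
Unshelve. all: by end_near.
Qed.

End Foster.

Lemma return_within_fin N s : return_within N s \is a fin_num.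
Proof.
by rewrite ge0_fin_numE ?return_within_ge0 // (le_lt_trans (return_within_le1 N s)) ?ltry.
Qed.

Lemma avoid_tail N s : \sum_(k <oo) first_passage k s = 1 ->
  avoid N s = \sum_(N <= k <oo) first_passage k s.
Proof.
move=> F1; have := nneseries_split 0 N (fun k _ => first_passage_ge0 k s).
rewrite add0n F1 return_within_partial -[LHS](return_within_avoid N s).
move/(congr1 (fun x => x - return_within N s)).
by rewrite ![return_within N s + _]addeC !addeK ?return_within_fin.
Qed.

Lemma avoid_le_tail_moment N s : \sum_(k <oo) first_passage k s = 1 ->
  N%:R%:E * avoid N s <= \sum_(N <= k <oo) (k.+1%:R%:E * first_passage k s).
Proof.
move=> F1; rewrite avoid_tail // -nneseriesZl => [|k _]; last exact: first_passage_ge0.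
apply: lee_lim.
- by apply: is_cvg_nneseries => k _ _; rewrite mule_ge0 ?first_passage_ge0.
- by apply: is_cvg_nneseries => k _ _; rewrite mule_ge0 ?first_passage_ge0.
near=> m; rewrite big_seq [X in _ <= X]big_seq; apply: lee_sum => k.
rewrite mem_index_iota => /andP[Nk _]; rewrite lee_wpmul2r ?first_passage_ge0 //.
by rewrite lee_fin ler_nat leqW.
Unshelve. all: by end_near.
Qed.

Section Submartingale.
Variables (u : S -> R) (c : R).
Hypothesis u_ge0 : forall s, (0 <= u s)%R.
Hypothesis u_o : u o = 0%R.
Hypothesis u_sub : forall s, (u s)%:E <= kernel (fun x => (u x)%:E) s.
Hypothesis u_step : forall s s', P s s' != 0%R -> (u s' <= u s + 1)%R.
Hypothesis c_gt0 : (0 < c)%R.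
Hypothesis u_o_drift : c%:E <= kernel (fun x => (u x)%:E) o.

Let uE_ge0 x : 0 <= (u x)%:E. Proof. by rewrite lee_fin. Qed.

Lemma kernel_taboo_u s : kernel (fun x => (u x)%:E) s = taboo (fun x => (u x)%:E) s.
Proof. by rewrite kernel_split // u_o mule0 add0e. Qed.

Lemma taboo_iter_ge N s : (u s)%:E <= taboo_iter N (fun x => (u x)%:E) s.
Proof.
elim: N s => [|N IHN] s //=.
apply: le_trans (u_sub s) _; rewrite kernel_taboo_u.
by apply: le_taboo => // x _ _; exact: IHN.
Qed.

Lemma taboo_iter_le N s :
  taboo_iter N (fun x => (u x)%:E) s <= (u s + N%:R)%:E * avoid N s.
Proof.
elim: N s => [|N IHN] s /=; first by rewrite addr0 mule1.
apply: (@le_trans _ _ (taboo (fun x => (u s + N.+1%:R)%:E * avoid N x) s)).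
  apply: le_taboo => [x|x _ Psx]; first exact: taboo_iter_ge0.
  apply: le_trans (IHN x) _; rewrite lee_wpmul2r ?avoid_ge0 // lee_fin.
  by rewrite -addn1 natrD; have := u_step Psx; lra.
by rewrite tabooZ ?addr_ge0 //; exact: avoid_ge0.
Qed.

(* [taboo_iter N u o] stays above [c] but is at most [N * avoid N o], which is
   bounded by a tail of the series of the mean return time. *)
Theorem submartingale_not_positive_recurrent : ~ positive_recurrent.
Proof.
move=> [F1 mean_fin].
pose a k := k.+1%:R%:E * first_passage k o.
have a_ge0 k : 0 <= a k by rewrite mule_ge0 ?first_passage_ge0.
have tail_ge N : c%:E <= \sum_(N.+1 <= k <oo) a k.
  apply: le_trans u_o_drift _; rewrite kernel_taboo_u.
  apply: (@le_trans _ _ (taboo_iter N.+1 (fun x => (u x)%:E) o)).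
    by apply: le_taboo => // x _ _; exact: taboo_iter_ge.
  apply: le_trans (taboo_iter_le N.+1 o) _.
  by rewrite u_o add0r avoid_le_tail_moment.
have tail_cvg := nneseries_tail_cvg mean_fin (fun k _ => a_ge0 k).
have : c%:E <= 0.
  rewrite -(cvg_lim (@ereal_hausdorff _) tail_cvg).
  apply: lime_ge; first exact: cvgP tail_cvg.
  by near=> N; have := tail_ge N.-1; rewrite prednK //; near: N; exists 1%N.
by rewrite lee_fin leNgt c_gt0.
Unshelve. all: by end_near.
Qed.

End Submartingale.
End ReturnTimes.

Section ArrivalProb.
Variables (R : realType) (n : nat) (lam : 'I_n -> R).
Hypothesis lam_gt0 : forall i, 0 < lam i.
Hypothesis n_gt0 : (0 < n)%N.

Definition arrival_prob i := lam i / \sum_k lam k.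

Lemma sum_lam_gt0 : 0 < \sum_k lam k.
Proof.
rewrite (bigD1 (Ordinal n_gt0)) //= ltr_pwDl ?lam_gt0 //.
by apply: sumr_ge0 => k _; exact: ltW.
Qed.

Lemma arrival_prob_gt0 i : 0 < arrival_prob i.
Proof. by rewrite divr_gt0 ?lam_gt0 ?sum_lam_gt0. Qed.

Lemma arrival_prob_ge0 i : 0 <= arrival_prob i.
Proof. exact/ltW/arrival_prob_gt0. Qed.

Lemma sum_arrival_prob : \sum_i arrival_prob i = 1.
Proof. by rewrite -mulr_suml mulfV // gt_eqF // sum_lam_gt0. Qed.

Lemma sum_arrival_prob_pred (A : pred 'I_n) :
  \sum_i arrival_prob i * (A i)%:R = \sum_(i | A i) arrival_prob i.
Proof.
by rewrite [RHS]big_mkcond; apply: eq_bigr => i _; case: (A i); rewrite ?mulr1 ?mulr0.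
Qed.

Lemma heavy_nbhdE (e : rel 'I_n) w : symmetric e ->
  (2^-1 * \sum_i lam i < \sum_(i in nbhd e w) lam i) =
  (2 * \sum_(i | ~~ e i w) arrival_prob i < 1).
Proof.
move=> e_sym; have L_gt0 := sum_lam_gt0.
have lamE : \sum_i lam i = \sum_(i in nbhd e w) lam i + \sum_(i | ~~ e i w) lam i.
  rewrite (bigID (mem (nbhd e w))) /=; congr (_ + _).
  by apply: eq_bigl => i; rewrite inE e_sym.
rewrite /arrival_prob -mulr_suml mulrA ltr_pdivrMr // mul1r lamE.
by apply/idP/idP => ?; lra.
Qed.

End ArrivalProb.

Section Policy.
Variables (R : realType) (n : nat) (e : rel 'I_n) (lam : 'I_n -> R) (p : policy R n).
Hypothesis lam_gt0 : forall i, 0 < lam i.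
Hypothesis n_gt0 : (0 < n)%N.
Hypothesis p_adapted : adapted e lam p.

Local Notation S := (pstate p).
Local Notation o := (pempty p).
Local Notation T := (trans lam p).
Local Notation cc := (arrival_prob lam).

Let cc_ge0 := arrival_prob_ge0 lam_gt0 n_gt0.

Lemma Phi_ge0 s i j s' : 0 <= Phi p s i j s'.
Proof. by case: p_adapted => _ [Phi_ge0 _]; exact: Phi_ge0. Qed.

Lemma sum_esum_Phi s i :
  (\sum_j \esum_(s' in setT) (Phi p s i j s')%:E = 1)%E.
Proof. by case: p_adapted => _ [_ [Phi_sum1 _]]; exact: Phi_sum1. Qed.

Lemma trans_ge0 s s' : 0 <= T s s'.
Proof.
apply: sumr_ge0 => i _; rewrite mulr_ge0 ?cc_ge0 //.
by apply: sumr_ge0 => j _; exact: Phi_ge0.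
Qed.

Lemma trans_neq0 s s' : T s s' != 0 -> exists i j, Phi p s i j s' != 0.
Proof.
apply: contraNP => /forallNP Phi0; apply/eqP/big1 => i _.
apply/eqP; rewrite mulf_eq0; apply/orP; right; apply/eqP/big1 => j _.
by have /forallNP/(_ j)/negP := Phi0 i; rewrite negbK => /eqP.
Qed.

Local Open Scope ereal_scope.

Lemma kernel_trans (g : S -> \bar R) s : (forall x, 0 <= g x) ->
  kernel T g s = \sum_i (cc i)%:E *
    \sum_j \esum_(s' in setT) ((Phi p s i j s')%:E * g s').
Proof.
move=> g0; have Phig0 x i j : 0 <= (Phi p s i j x)%:E * g x.
  by rewrite mule_ge0 ?lee_fin ?Phi_ge0.
transitivity (\esum_(s' in setT)
    \sum_i ((cc i)%:E * \sum_j ((Phi p s i j s')%:E * g s'))).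
  apply: eq_esum => s' _; rewrite /trans -sumEFin ge0_sume_distrl => [|i _]; last first.
    by rewrite lee_fin mulr_ge0 ?cc_ge0 ?sumr_ge0 // => j _; exact: Phi_ge0.
  apply: eq_bigr => i _; rewrite EFinM -muleA -sumEFin ge0_sume_distrl //.
  by move=> j _; rewrite lee_fin Phi_ge0.
rewrite esum_sum => [|x i _ _]; last by rewrite mule_ge0 ?lee_fin ?cc_ge0 ?sume_ge0.
apply: eq_bigr => i _; rewrite esumZl ?cc_ge0 // => [|x]; last exact: sume_ge0.
by rewrite esum_sum.
Qed.

Lemma kernel_trans_le (g : S -> \bar R) (b : 'I_n -> R) s :
  (forall x, 0 <= g x) -> (forall i, (0 <= b i)%R) ->
  (forall i j s', (Phi p s i j s' != 0)%R -> g s' <= (b i)%:E) ->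
  kernel T g s <= \sum_i (cc i * b i)%:E.
Proof.
move=> g0 b0 gb; rewrite kernel_trans //; apply: lee_sum => i _.
rewrite (EFinM (cc i)) lee_wpmul2l ?lee_fin ?cc_ge0 //.
rewrite -[X in _ <= X]mule1 -(sum_esum_Phi s i) ge0_sume_distrr => [|j _]; last first.
  by apply: esum_ge0 => x _; rewrite lee_fin Phi_ge0.
apply: lee_sum => j _; rewrite -esumZl // => [|x]; last by rewrite lee_fin Phi_ge0.
apply: le_esum => x _; have [->|Phi_neq0] := eqVneq (Phi p s i j x) 0%R.
  by rewrite !(mul0e, mule0).
by rewrite [X in _ <= X]muleC lee_wpmul2l ?lee_fin ?Phi_ge0 //; exact: (gb i j).
Qed.

Lemma kernel_trans_ge (g : S -> \bar R) (b : 'I_n -> R) s :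
  (forall x, 0 <= g x) -> (forall i, (0 <= b i)%R) ->
  (forall i j s', (Phi p s i j s' != 0)%R -> (b i)%:E <= g s') ->
  \sum_i (cc i * b i)%:E <= kernel T g s.
Proof.
move=> g0 b0 bg; rewrite kernel_trans //; apply: lee_sum => i _.
rewrite (EFinM (cc i)) lee_wpmul2l ?lee_fin ?cc_ge0 //.
rewrite -[X in X <= _]mule1 -(sum_esum_Phi s i) ge0_sume_distrr => [|j _]; last first.
  by apply: esum_ge0 => x _; rewrite lee_fin Phi_ge0.
apply: lee_sum => j _; rewrite -esumZl // => [|x]; last by rewrite lee_fin Phi_ge0.
apply: le_esum => x _; have [->|Phi_neq0] := eqVneq (Phi p s i j x) 0%R.
  by rewrite !(mul0e, mule0).
by rewrite [X in X <= _]muleC lee_wpmul2l ?lee_fin ?Phi_ge0 //; exact: (bg i j).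
Qed.

Lemma trans_sum1 s : \esum_(s' in setT) (T s s')%:E = 1.
Proof.
have -> : \esum_(s' in setT) (T s s')%:E = kernel T (fun=> 1) s.
  by apply: eq_esum => x _; rewrite mule1.
have cc1 : \sum_i (cc i * 1)%:E = 1.
  by rewrite sumEFin; under eq_bigr do rewrite mulr1; rewrite sum_arrival_prob.
have le1 := @kernel_trans_le (fun=> 1) (fun=> 1%R) s (fun=> lee01) (fun=> ler01)
  (fun _ _ _ _ => lexx _).
have ge1 := @kernel_trans_ge (fun=> 1) (fun=> 1%R) s (fun=> lee01) (fun=> ler01)
  (fun _ _ _ _ => lexx _).
by rewrite cc1 in le1 ge1; apply/eqP; rewrite eq_le le1 ge1.
Qed.

Lemma stableE : stable lam p = positive_recurrent T o.
Proof.
rewrite /stable; suff -> : first_return lam p = first_passage T o by [].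
apply/funext => k; apply/funext; elim: k => [|k IHk] s //=.
by apply: eq_esum => x _; rewrite IHk.
Qed.

Local Open Scope ring_scope.

Definition qweight (w : 'I_n -> R) s := \sum_x w x * (qsize p s x)%:R.

Let sum_weight_eq (w : 'I_n -> R) i : \sum_x w x * (x == i)%:R = w i.
Proof.
rewrite (bigD1 i) //= eqxx mulr1 big1 ?addr0 // => x /negbTE ->.
by rewrite mulr0.
Qed.

Lemma qweight_unmatched w s i s' :
  Phi p s i None s' != 0 -> qweight w s' = qweight w s + w i.
Proof.
case: p_adapted => _ [_ [_ [qsize_unmatched _]]] /eqP /qsize_unmatched qE.
rewrite /qweight -(sum_weight_eq w i) -big_split /=; apply: eq_bigr => x _.
by rewrite qE natrD mulrDr.
Qed.

Lemma qweight_matched w s i j s' : Phi p s i (Some j) s' != 0 ->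
  [/\ e i j, (0 < qsize p s j)%N & qweight w s' = qweight w s - w j].
Proof.
case: p_adapted => _ [_ [_ [_ [qsize_matched _]]]] /eqP /qsize_matched [ij j_waiting qE].
split => //; rewrite /qweight -(sum_weight_eq w j) -sumrB; apply: eq_bigr => x _.
rewrite qE -mulrBr; have [->|_] := eqVneq x j; first by rewrite natrB.
by rewrite subn0 subr0.
Qed.

Lemma qsize_empty x : qsize p o x = 0%N.
Proof. by case: p_adapted => emptyP _; move: x; apply/(emptyP o). Qed.

Lemma qweight_empty w : qweight w o = 0.
Proof. by rewrite /qweight big1 // => x _; rewrite qsize_empty mulr0. Qed.

Lemma Phi_empty_unmatched i j s' : Phi p o i j s' != 0 -> j = None.
Proof. by case: j => // j /(qweight_matched (fun=> 0)) [_]; rewrite qsize_empty. Qed.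

Lemma exists_waiting s : s <> o -> exists x, (0 < qsize p s x)%N.
Proof.
move=> so; apply: contra_notP so => /forallNP no_waiting.
case: p_adapted => emptyP _; apply/emptyP => x.
by have /negP := no_waiting x; rewrite lt0n negbK => /eqP.
Qed.

Definition qlen := qweight (fun=> 1).

Lemma qlen_ge0 s : 0 <= qlen s.
Proof. by apply: sumr_ge0 => x _; rewrite mul1r ler0n. Qed.

Lemma qlen_ge1 s w : (0 < qsize p s w)%N -> 1 <= qlen s.
Proof.
move=> w_waiting; rewrite /qlen /qweight (bigD1 w) //= mul1r ler_wpDr ?ler1n //.
by apply: sumr_ge0 => x _; rewrite mul1r ler0n.
Qed.

Section Greedy.
Hypothesis p_greedy : greedy e p.

(* an arrival adjacent to a waiting class [w] is always matched *)
Lemma greedy_qlen_step w s i j s' : (0 < qsize p s w)%N ->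
  Phi p s i j s' != 0 -> qlen s' <= qlen s - 1 + 2 * (~~ e i w)%:R.
Proof.
move=> w_waiting; rewrite /qlen; case: j => [j|] Phi_neq0.
  have [_ _ ->] := qweight_matched (fun=> 1) Phi_neq0.
  by have : 0 <= (~~ e i w)%:R :> R by []; lra.
have iw : ~~ e i w.
  by apply: contraNN Phi_neq0 => iw; rewrite (p_greedy s' iw w_waiting).
by rewrite (qweight_unmatched _ Phi_neq0) iw /=; lra.
Qed.

Lemma greedy_qlen_drift (dl : R) s : 0 < dl ->
  (forall w, 2 * \sum_(i | ~~ e i w) cc i + dl <= 1) -> s <> o ->
  (kernel T (fun x => (qlen x / dl)%:E) s + 1 <= (qlen s / dl)%:E)%E.
Proof.
move=> dl_gt0 light /exists_waiting [w w_waiting].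
have qlen_s_ge1 := qlen_ge1 w_waiting.
pose b i := (qlen s - 1 + 2 * (~~ e i w)%:R) / dl.
rewrite (le_trans (leeD2r _ (kernel_trans_le (b := b) _ _ _))) //.
- by move=> x; rewrite lee_fin divr_ge0 ?qlen_ge0 ?ltW.
- move=> i; apply: divr_ge0; last exact: ltW.
  by rewrite addr_ge0 ?mulr_ge0 ?subr_ge0.
- move=> i j s' Phi_neq0; rewrite lee_fin ler_pM2r ?invr_gt0 //.
  exact: greedy_qlen_step w_waiting Phi_neq0.
rewrite sumEFin -EFinD lee_fin.
have -> : \sum_i cc i * b i = (qlen s - 1) / dl + 2 / dl * \sum_(i | ~~ e i w) cc i.
  transitivity (\sum_i (cc i * ((qlen s - 1) / dl) + 2 / dl * (cc i * (~~ e i w)%:R))).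
    by apply: eq_bigr => i _; rewrite /b; ring.
  rewrite big_split /= -mulr_suml sum_arrival_prob // mul1r.
  by rewrite -sum_arrival_prob_pred mulr_sumr.
set X := \sum_(i | ~~ e i w) cc i.
rewrite -subr_ge0 (_ : _ - _ = (1 - (2 * X + dl)) / dl); last by field; rewrite gt_eqF.
by rewrite divr_ge0 ?subr_ge0 ?light ?ltW.
Qed.

Lemma greedy_stable :
  (forall w, 2 * \sum_(i | ~~ e i w) cc i < 1) -> stable lam p.
Proof.
move=> light; pose m := \big[Num.max/0]_w \sum_(i | ~~ e i w) cc i.
pose dl := 1 - 2 * m.
have dl_gt0 : 0 < dl.
  suff : m < 2^-1 by rewrite /dl; lra.
  apply/bigmax_ltP; split => [|w _]; first by rewrite invr_gt0.
  by have := light w; lra.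
have light_dl w : 2 * \sum_(i | ~~ e i w) cc i + dl <= 1.
  by have := le_bigmax 0 (fun w => \sum_(i | ~~ e i w) cc i) w; rewrite -/m /dl; lra.
rewrite stableE; apply: (foster_positive_recurrent trans_ge0 trans_sum1
  (V := fun s => qlen s / dl) (c := dl^-1)).
- by move=> s; rewrite divr_ge0 ?qlen_ge0 ?ltW.
- by move=> s; exact: greedy_qlen_drift.
rewrite (le_trans (kernel_trans_le (b := fun=> dl^-1) _ _ _)) //.
- by move=> x; rewrite lee_fin divr_ge0 ?qlen_ge0 ?ltW.
- by move=> i; rewrite invr_ge0 ltW.
- move=> i j s' /[dup] /Phi_empty_unmatched -> Phi_neq0.
  by rewrite /qlen (qweight_unmatched _ Phi_neq0) qweight_empty add0r mul1r.
by rewrite sumEFin -mulr_suml sum_arrival_prob // mul1r.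
Qed.

End Greedy.

Section Unstable.
Variable w : 'I_n.
Hypothesis nonnbhd_indep : forall i j, ~~ e i w -> ~~ e j w -> ~~ e i j.
Hypothesis heavy : 1 <= 2 * \sum_(i | ~~ e i w) cc i.

Let sgn x : R := if e x w then -1 else 1.
(* the number of queued items outside the neighbourhood of [w] minus those in it *)
Let D := qweight sgn.
Let u s := Num.max (D s) 0.

Let u_ge0 s : 0 <= u s. Proof. by rewrite le_max lexx orbT. Qed.

(* an arrival outside the neighbourhood of [w] can only be matched inside it *)
Let D_arrival_ge s i j s' : Phi p s i j s' != 0 -> D s + sgn i <= D s'.
Proof.
rewrite /D; case: j => [j|] Phi_neq0; last by rewrite (qweight_unmatched _ Phi_neq0).
have [ij _ ->] := qweight_matched sgn Phi_neq0; rewrite /sgn.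
case: ifP => iw; case: ifP => jw; rewrite ?lerD2l //; try lra.
by have := nonnbhd_indep (negbT iw) (negbT jw); rewrite ij.
Qed.

Let D_step s s' : T s s' != 0 -> D s' <= D s + 1.
Proof.
move=> /trans_neq0 [i [[j|] Phi_neq0]].
  by rewrite /D; have [_ _ ->] := qweight_matched sgn Phi_neq0; rewrite /sgn; case: ifP; lra.
by rewrite /D (qweight_unmatched _ Phi_neq0) /sgn; case: ifP; lra.
Qed.

Let u_step s s' : T s s' != 0 -> u s' <= u s + 1.
Proof.
move=> /D_step Ds'; rewrite ge_max; apply/andP; split.
  by apply: le_trans Ds' _; rewrite lerD2r le_max lexx.
by rewrite addr_ge0.
Qed.

Let u_sub s : ((u s)%:E <= kernel T (fun x => (u x)%:E) s)%E.
Proof.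
have [D_le0|D_gt0] := leP (D s) 0.
  rewrite /u max_r //; apply: esum_ge0 => x _.
  by rewrite mule_ge0 ?lee_fin ?trans_ge0 //; exact: u_ge0.
rewrite (le_trans _ (kernel_trans_ge (b := fun i => Num.max (D s + sgn i) 0) _ _ _)) //.
- rewrite sumEFin lee_fin /u max_l; last exact: ltW.
  apply: (@le_trans _ _ (\sum_i cc i * (D s + sgn i))); last first.
    by apply: ler_sum => i _; rewrite ler_wpM2l ?cc_ge0 // le_max lexx.
  rewrite (eq_bigr (fun i => cc i * D s + (2 * (cc i * (~~ e i w)%:R) - cc i))) => [|i _].
    rewrite big_split sumrB /= -mulr_suml -mulr_sumr sum_arrival_prob_pred.
    by rewrite sum_arrival_prob // mul1r lerDl subr_ge0.
  by rewrite /sgn; case: (e i w) => /=; ring.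
- by move=> i; rewrite le_max lexx orbT.
move=> i j s' /D_arrival_ge Ds'; rewrite lee_fin /u.
by rewrite ge_max !le_max Ds' lexx orbT.
Qed.

Lemma unstable_heavy_nonnbhd : ~ stable lam p.
Proof.
have light_gt0 : 0 < \sum_(i | ~~ e i w) cc i by have := heavy; lra.
rewrite stableE; apply: (submartingale_not_positive_recurrent trans_ge0 trans_sum1
  u_ge0 _ u_sub u_step light_gt0).
  by rewrite /u /D qweight_empty maxxx.
rewrite -sum_arrival_prob_pred -sumEFin.
apply: kernel_trans_ge => [x|i|i j s' /[dup] /Phi_empty_unmatched -> Phi_neq0].
- by rewrite lee_fin.
- by rewrite ler0n.
rewrite lee_fin /u /D (qweight_unmatched _ Phi_neq0) qweight_empty add0r /sgn.
by case: (e i w) => /=; rewrite ?le_max ?lexx ?orbT.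
Qed.

End Unstable.
End Policy.

Section Graphs.
Variables (n : nat) (e : rel 'I_n).

(* for a simple graph: the complement graph is triangle-free *)
Definition nonnbhd_independent :=
  forall w i j, ~~ e i w -> ~~ e j w -> ~~ e i j.

Lemma complete_nonnbhd_independent : complete_graph e -> nonnbhd_independent.
Proof. by move=> eE w i j; rewrite !eE !negbK => /eqP-> /eqP->; rewrite eqxx. Qed.

Lemma diameter_ge3_disjoint_nbhd : symmetric e -> diameter_ge3 e ->
  exists x y, [disjoint nbhd e x & nbhd e y].
Proof.
move=> e_sym [x [y xy]]; exists x, y; apply/pred0P => z /=; rewrite !inE.
apply/negP => /andP[xz yz].
move/negP: xy; apply; apply/orP; right; apply/existsP; exists z.
by rewrite xz /=; apply/orP; right; apply/existsP; exists y; rewrite eqxx andbT e_sym.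
Qed.

Variables (R : realType) (lam : 'I_n -> R).
Hypothesis lam_ge0 : forall i, 0 <= lam i.

Lemma condC_of_heavy_nbhd :
  (forall w, 2^-1 * \sum_i lam i < \sum_(i in nbhd e w) lam i) -> condC e lam.
Proof.
move=> heavy I /andP[/card_gt0P[w wI] _]; apply: lt_le_trans (heavy w) _.
by apply: ler_sum_subset => // i iw; apply/finset.bigcupP; exists w.
Qed.

Lemma heavy_nbhd_of_condC w : irreflexive e -> condC e lam ->
  2^-1 * \sum_i lam i < \sum_(i in nbhd e w) lam i.
Proof.
move=> e_irr /(_ [set w]); rewrite /nbhd_set big_set1; apply.
rewrite /independent cards1 /=; apply/forall_inP => a /set1P ->.
by apply/forall_inP => b /set1P ->; rewrite e_irr.
Qed.

Lemma disjoint_nbhd_not_condC (x y : 'I_n) : irreflexive e ->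
  [disjoint nbhd e x & nbhd e y] -> ~ condC e lam.
Proof.
move=> e_irr xy C; have := heavy_nbhd_of_condC x e_irr C.
have := heavy_nbhd_of_condC y e_irr C.
have : \sum_(i in nbhd e x) lam i + \sum_(i in nbhd e y) lam i <= \sum_i lam i.
  rewrite -bigU //= [X in _ <= X](bigID [predU nbhd e x & nbhd e y]) /=.
  by rewrite lerDl sumr_ge0.
lra.
Qed.

End Graphs.

Lemma diamond_nonnbhd_independent : nonnbhd_independent diamond_rel.
Proof.
by move=> [[|[|[|[|//]]]] ?] [[|[|[|[|//]]]] ?] [[|[|[|[|//]]]] ?].
Qed.

Lemma diamond_cast_nonnbhd_independent n (e : rel 'I_n) (H : n = 4%N) :
  (forall x y, e x y = diamond_rel (cast_ord H x) (cast_ord H y)) ->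
  nonnbhd_independent e.
Proof. by move=> eE w i j; rewrite !eE; exact: diamond_nonnbhd_independent. Qed.

Unset Implicit Arguments.
Set Strict Implicit.

Theorem corollaryA2 (R : realType) (n : nat) (e : rel 'I_n)
  (lam : 'I_n -> R) :
  simple_graph e ->
  (forall i, 0 < lam i) ->
  ((complete_graph e /\ (3 <= n)%N) \/
   (exists H : n = 4%N,
      forall x y : 'I_n, e x y = diamond_rel (cast_ord H x) (cast_ord H y)) ->
   stabilizable e lam ->
   condC e lam /\
   (forall p : policy R n, adapted e lam p -> greedy e p -> stable lam p)) /\
  (diameter_ge3 e \/ (exists x, degree e x = 1%N) -> ~ condC e lam).
Proof.
move=> [e_sym e_irr] lam_gt0; have lam_ge0 i := ltW (lam_gt0 i).
split=> [hG [p0 [p0_adapted p0_stable]]|]; last first.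
  case=> [/(diameter_ge3_disjoint_nbhd e_sym) [x [y]]|[x /eqP/cards1P[y xE]]].
    exact: disjoint_nbhd_not_condC.
  have xy : [disjoint nbhd e x & nbhd e y] by rewrite xE disjoints1 inE e_irr.
  exact: disjoint_nbhd_not_condC xy.
have n_gt0 : (0 < n)%N by case: hG => [[_ /(leq_trans _)->]|[H _]]; rewrite ?H.
have indep : nonnbhd_independent e.
  case: hG => [[/complete_nonnbhd_independent //]|[H]].
  exact: diamond_cast_nonnbhd_independent.
have light w : 2 * \sum_(i | ~~ e i w) arrival_prob lam i < 1.
  rewrite ltNge; apply/negP => heavy.
  exact: (unstable_heavy_nonnbhd lam_gt0 n_gt0 p0_adapted (indep w) heavy).
split; first by apply: condC_of_heavy_nbhd => // w; rewrite heavy_nbhdE.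
by move=> p p_adapted p_greedy; exact: (greedy_stable lam_gt0 n_gt0 p_adapted p_greedy light).
Qed.
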